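(* There is no exhaustive strategy-proof PB algorithm $G$ and constant $\alpha>\frac{2}{3}$ such that $\min_{i\in N}u_i(G(I))\ge\alpha\cdot OPT(I)$ for every PB instance $I$ in which every project has cost $1$ and every approval vote is a knapsack vote (i.e., $c(A_i)\le b$ for all $i$). Here $OPT(I)=\max_{S\subseteq P,\,c(S)\le b}\min_{i\in N}u_i(S)$.
   Context: A PB instance is $I=\langle N,P,c,b,\mathcal{A}\rangle$ with voters $N=\{1,\dots,n\}$, projects $P$, costs $c:P\to\mathbb{N}$, budget $b\in\mathbb{N}$, and approval sets $A_i\subseteq P$. $c(S)=\sum_{p\in S}c(p)$; $S$ is feasible if $c(S)\le b$; $u_i(S)=c(S\cap A_i)$. A PB algorithm $G$ maps every instance to a single feasible set $G(I)$. $G$ is strategy-proof if for every instance, every voter $i$ and every $S\subseteq P$, $c(A_i\cap G(A_i,\mathcal{A}_{-i}))\ge c(A_i\cap G(S,\mathcal{A}_{-i}))$, where $(S,\mathcal{A}_{-i})$ denotes the profile obtained by replacing $A_i$ with $S$ and keeping all other votes and $N,P,c,b$ fixed. $G$ is exhaustive if for every instance $I$ and every $p\notin G(I)$, $c(p)+c(G(I))>b$. *)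

From HB Require Import structures.
From mathcomp Require Import all_boot all_order all_algebra.
From mathcomp Require Import reals.

Set Implicit Arguments.
Unset Strict Implicit.
Unset Printing Implicit Defensive.

Record instance := Inst {
  nv : nat;
  np : nat;
  cost : 'I_np -> nat;
  budget : nat;
  votes : 'I_nv -> {set 'I_np}
}.
Arguments cost : clear implicits.
Arguments budget : clear implicits.
Arguments votes : clear implicits.

Definition csum (I : instance) (S : {set 'I_(np I)}) : nat :=
  \sum_(p in S) cost I p.

Definition feasible (I : instance) (S : {set 'I_(np I)}) : bool :=
  csum S <= budget I.

Definition util (I : instance) (i : 'I_(nv I)) (S : {set 'I_(np I)}) : nat :=
  csum (S :&: votes I i).

(* min_{i in N} u_i(S) (the identity c(P) is an upper bound of every u_i(S),
   so this is the true minimum whenever N is nonempty). *)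
Definition minutil (I : instance) (S : {set 'I_(np I)}) : nat :=
  \big[minn/csum [set: 'I_(np I)]]_(i : 'I_(nv I)) util i S.

Definition OPT (I : instance) : nat :=
  \max_(S : {set 'I_(np I)} | feasible S) minutil S.

Definition deviate (I : instance) (i : 'I_(nv I)) (S : {set 'I_(np I)}) : instance :=
  @Inst (nv I) (np I) (cost I) (budget I)
        (fun j => if j == i then S else votes I j).

Definition algorithm := forall I : instance, {set 'I_(np I)}.

Definition is_PB_algorithm (G : algorithm) : Prop :=
  forall I, feasible (G I).

Definition strategy_proof (G : algorithm) : Prop :=
  forall (I : instance) (i : 'I_(nv I)) (S : {set 'I_(np I)}),
    csum (votes I i :&: G (deviate i S)) <= csum (votes I i :&: G I).

Definition exhaustive (G : algorithm) : Prop :=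
  forall (I : instance) (p : 'I_(np I)),
    p \notin G I -> budget I < cost I p + csum (G I).

Definition unit_costs (I : instance) : Prop := forall p, cost I p = 1.

Definition knapsack_votes (I : instance) : Prop :=
  forall i, csum (votes I i) <= budget I.

(* Take three unit-cost projects a, b, c, budget 2, and the profile where
   voter a approves {b, c}, voter b approves {a, c} and voter c approves {c}.
   If voter a instead reports {b}, the set {b, c} gives every voter positive
   utility, so OPT >= 1 and any approximation with alpha > 0 must fund the
   singleton votes b and c; voter a then gets utility 2, and strategy-proofness
   forces {b, c} to be funded in the original profile.  Symmetrically (voter b
   reporting {a}) {a, c} is funded, so all three projects are, exceeding the
   budget. *)
From HB Require Import structures.
From mathcomp Require Import all_boot all_order all_algebra.
From mathcomp Require Import reals.
Import Order.TTheory GRing.Theory Num.Theory.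

Set Implicit Arguments.
Unset Strict Implicit.
Unset Printing Implicit Defensive.

Lemma csum_unit (I : instance) (S : {set 'I_(np I)}) :
  unit_costs I -> csum S = #|S|.
Proof. by move=> unitI; rewrite /csum (eq_bigr (fun _ => 1%N)) ?sum1_card. Qed.

Lemma minutil_le_OPT (I : instance) (S : {set 'I_(np I)}) :
  feasible S -> minutil S <= OPT I.
Proof. exact: leq_bigmax_cond. Qed.

Lemma minutil_gt0 (I : instance) (S : {set 'I_(np I)}) :
  0 < csum [set: 'I_(np I)] -> (forall i, 0 < util i S) -> 0 < minutil S.
Proof.
move=> csumT_gt0 util_gt0; apply: (big_ind (fun m => 0 < m)) => //.
by move=> m n m_gt0 n_gt0; rewrite leq_min m_gt0.
Qed.

Lemma util_gt0_unit (I : instance) (i : 'I_(nv I)) (S : {set 'I_(np I)}) :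
  unit_costs I -> (0 < util i S) = (S :&: votes I i != set0).
Proof. by move=> unitI; rewrite /util csum_unit // card_gt0. Qed.

Lemma mem_of_util_gt0 (I : instance) (i : 'I_(nv I)) (S : {set 'I_(np I)}) x :
  votes I i = [set x] -> 0 < util i S -> x \in S.
Proof.
move=> votes_i; apply: contraTT => xNS; rewrite /util.
suff -> : S :&: votes I i = set0 by rewrite /csum big_set0.
apply/setP => y; rewrite votes_i !inE; apply/andP => -[yS /eqP yx].
by rewrite -yx yS in xNS.
Qed.

Lemma strategy_proof_subset (G : algorithm) (I : instance) (i : 'I_(nv I))
    (S : {set 'I_(np I)}) :
  strategy_proof G -> unit_costs I ->
  votes I i \subset G (deviate i S) -> votes I i \subset G I.
Proof.
move=> spG unitI /setIidPl votes_dev.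
have := spG I i S; rewrite !csum_unit // votes_dev => card_le.
by apply/setIidPl/eqP; rewrite eqEcard subsetIl.
Qed.

Lemma setC1_card3 (T : finType) (x y z : T) :
  #|T| = 3 -> x != y -> x != z -> y != z -> [set~ x] = [set y; z].
Proof.
move=> cardT xy xz yz; apply/esym/eqP.
rewrite eqEcard cardsC1 cards2 yz cardT andbT.
by apply/subsetP => w; rewrite !inE => /orP[] /eqP ->; rewrite eq_sym.
Qed.

Definition pa : 'I_3 := @Ordinal 3 0 isT.
Definition pb : 'I_3 := @Ordinal 3 1 isT.
Definition pc : 'I_3 := @Ordinal 3 2 isT.

Definition votes0 (j : 'I_3) : {set 'I_3} :=
  if j == pc then [set pc] else [set~ j].

Definition I0 : instance := @Inst 3 3 (fun _ => 1%N) 2 votes0.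

Lemma pc_in_votes0 (j : 'I_3) : pc \in votes0 j.
Proof. by rewrite /votes0; case: eqP => [_|/eqP]; rewrite !inE // eq_sym. Qed.

Lemma card_votes0 (j : 'I_3) : #|votes0 j| <= 2.
Proof. by rewrite /votes0; case: ifP; rewrite ?cards1 ?cardsC1 ?card_ord. Qed.

Section Approximation.

Variables (R : realType) (G : algorithm) (alpha : R).
Hypothesis alpha_gt0 : (0 < alpha)%R.
Hypothesis spG : strategy_proof G.
Hypothesis G_approx : forall I : instance, unit_costs I -> knapsack_votes I ->
  forall i : 'I_(nv I), (alpha * (OPT I)%:R <= (util i (G I))%:R)%R.

Lemma singleton_vote_mem (I : instance) (i : 'I_(nv I)) x :
  unit_costs I -> knapsack_votes I -> 0 < OPT I ->
  votes I i = [set x] -> x \in G I.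
Proof.
move=> unitI knapI OPT_gt0 votes_i; apply: (mem_of_util_gt0 votes_i).
rewrite -(ltr0n R); apply: lt_le_trans (G_approx unitI knapI i).
by rewrite mulr_gt0 ?ltr0n.
Qed.

Lemma setC1_subset_G0 (x y : 'I_3) :
  x != y -> x != pc -> y != pc -> [set~ x] \subset G I0.
Proof.
move=> xy xc yc; pose I1 := deviate (I := I0) x [set y].
have unit1 : unit_costs I1 by [].
have knap1 : knapsack_votes I1.
  move=> j; rewrite csum_unit //= /deviate /=.
  by case: ifP; rewrite ?cards1 ?card_votes0.
have votes1 (j : 'I_3) : votes I1 j = if j == x then [set y] else votes0 j by [].
have feas1 : feasible (I := I1) [set y; pc].
  by rewrite /feasible csum_unit // cards2 yc.
have OPT1_gt0 : 0 < OPT I1.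
  apply: leq_trans (minutil_le_OPT feas1); apply: minutil_gt0 => [|j].
    by rewrite csum_unit // cardsT card_ord.
  rewrite util_gt0_unit //; apply/set0Pn.
  rewrite votes1; case: eqP => _; [exists y | exists pc];
    by rewrite !inE ?eqxx ?orbT ?pc_in_votes0.
have GyC := setC1_card3 (card_ord 3) xy xc yc.
have votes0x : votes I0 x = [set~ x] by rewrite /= /votes0 (negbTE xc).
rewrite -votes0x.
apply: (strategy_proof_subset (I := I0) (i := x) (S := [set y]) spG) => //.
rewrite votes0x GyC; apply/subsetP => p; rewrite !inE.
case/orP => /eqP ->.
  by apply: (singleton_vote_mem (I := I1) (i := x)); rewrite // votes1 eqxx.
apply: (singleton_vote_mem (I := I1) (i := pc)) => //.
by rewrite votes1 eq_sym (negbTE xc) /votes0 eqxx.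
Qed.

End Approximation.

Local Open Scope ring_scope.

Theorem theorem5 (R : realType) :
  ~ exists (G : algorithm) (alpha : R),
      [/\ is_PB_algorithm G, exhaustive G, strategy_proof G,
          2%:R / 3%:R < alpha &
          forall I : instance, unit_costs I -> knapsack_votes I ->
            forall i : 'I_(nv I),
              alpha * (OPT I)%:R <= (util i (G I))%:R].
Proof.
case=> G [alpha [feasG _ spG lt_alpha G_approx]].
have alpha_gt0 : 0 < alpha by apply: lt_trans lt_alpha; rewrite divr_gt0 ?ltr0n.
have Ga := setC1_subset_G0 alpha_gt0 spG G_approx (x := pa) (y := pb) isT isT isT.
have Gb := setC1_subset_G0 alpha_gt0 spG G_approx (x := pb) (y := pa) isT isT isT.
have GT : G I0 = [set: 'I_3].
  apply/eqP; rewrite eqEsubset subsetT; apply/subsetP => p _.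
  have [<-|pa_p] := eqVneq pa p; [apply: (subsetP Gb) | apply: (subsetP Ga)];
    by rewrite !inE // eq_sym.
by have := feasG I0; rewrite /feasible csum_unit // GT cardsT card_ord.
Qed.
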